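(* Let $p\ge1$, $0\le q<2p$, $D_p>0$, $K_q>0$, and suppose that for $0<\epsilon\le\epsilon_0$ and all $B>0$ \[ \Delta_{\mathrm{MSE}}(\epsilon,B)=D_p\epsilon^{2p}-\frac{K_q\epsilon^q}{B}+R_p(\epsilon,B),\qquad |R_p(\epsilon,B)|\le L_b\epsilon^{2p+\delta_b}+L_v\frac{\epsilon^{q+\delta_v}}{B}, \] with $L_b,L_v,\delta_b,\delta_v>0$. Let $C=(K_q/D_p)^{1/(2p-q)}$, $r=1/(2p-q)$, $f_{p,q}(x)=D_px^{2p}-K_qx^q$, fix $0<\rho<1$, set $x_-=(1-\rho)C$, $x_+=(1+\rho)C$, and \[ \mathfrak m_\rho=\min\{K_qx_-^q-D_px_-^{2p},\;D_px_+^{2p}-K_qx_+^q\}>0. \] If \[ B\ge B_0(\rho):=\max\left\{\left(\frac{4L_bx_+^{2p+\delta_b}}{\mathfrak m_\rho}\right)^{1/(r\delta_b)},\left(\frac{4L_vx_+^{q+\delta_v}}{\mathfrak m_\rho}\right)^{1/(r\delta_v)},\left(\frac{x_+}{\epsilon_0}\right)^{1/r}\right\}, \] then $\Delta_{\mathrm{MSE}}(x_-B^{-r},B)<0$ and $\Delta_{\mathrm{MSE}}(x_+B^{-r},B)>0$; consequently at least one sign-changing crossing $\epsilon^*_{\mathrm{loc}}(B)$ of $\Delta_{\mathrm{MSE}}(\cdot,B)$ lies in \[ (1-\rho)CB^{-r}\le\epsilon^*_{\mathrm{loc}}(B)\le(1+\rho)CB^{-r}. \] If in addition $f_{p,q}'>0$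 on $[x_-,x_+]$ and the $x$-derivative of the rescaled remainder $\eta_B(x)=B^{2pr}R_p(xB^{-r},B)$ is bounded in absolute value on $[x_-,x_+]$ by less than half of $\min_{[x_-,x_+]}f'_{p,q}$, then the crossing in this bracket is unique.
   Context: $\Delta_{\mathrm{MSE}}(\epsilon,B)$ is the mean-squared-error difference (unmitigated minus zero-noise-extrapolated) at noise strength $\epsilon$ and total shot budget $B$. *)

From Stdlib Require Import Reals.
From Coquelicot Require Import Coquelicot.
Open Scope R_scope.

Definition r_exp (p q : R) : R := 1 / (2 * p - q).

Definition C_const (p q Dp Kq : R) : R := Rpower (Kq / Dp) (1 / (2 * p - q)).

Definition fpq (p q Dp Kq : R) (x : R) : R := Dp * Rpower x (2 * p) - Kq * Rpower x q.

Definition x_minus (p q Dp Kq rho : R) : R := (1 - rho) * C_const p q Dp Kq.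
Definition x_plus (p q Dp Kq rho : R) : R := (1 + rho) * C_const p q Dp Kq.

Definition m_rho (p q Dp Kq rho : R) : R :=
  let xm := x_minus p q Dp Kq rho in
  let xp := x_plus p q Dp Kq rho in
  Rmin (Kq * Rpower xm q - Dp * Rpower xm (2 * p))
       (Dp * Rpower xp (2 * p) - Kq * Rpower xp q).

Definition B0 (p q Dp Kq eps0 Lb Lv db dv rho : R) : R :=
  let xp := x_plus p q Dp Kq rho in
  let m := m_rho p q Dp Kq rho in
  let r := r_exp p q in
  Rmax (Rmax (Rpower (4 * Lb * Rpower xp (2 * p + db) / m) (1 / (r * db)))
             (Rpower (4 * Lv * Rpower xp (q + dv) / m) (1 / (r * dv))))
       (Rpower (xp / eps0) (1 / r)).

Definition eta_B (p q : R) (Rp : R -> R -> R) (B : R) (x : R) : R :=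
  Rpower B (2 * p * r_exp p q) * Rp (x * Rpower B (- r_exp p q)) B.

From Stdlib Require Import Reals Lra.
From Coquelicot Require Import Coquelicot.
Open Scope R_scope.

(* With e = x B^(-r) the exponents balance because r (2p - q) = 1, so that
   B^(2pr) Delta(e, B) = f_{p,q}(x) + eta_B(x).  Since C^(2p-q) = K_q / D_p we have
   f_{p,q}(c C) = K_q (c C)^q (c^(2p-q) - 1), hence f_{p,q}(x_-) <= -m_rho and
   f_{p,q}(x_+) >= m_rho.  Each of the three terms of B_0 is chosen so that, on
   (0, x_+], e stays below eps0 and each of the two remainder terms of eta_B is at
   most m_rho / 4; so Delta has the sign of f_{p,q} at x_- B^(-r) and x_+ B^(-r),
   and the intermediate value theorem gives a crossing.  If |eta_B'| < f_{p,q}'/2,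
   then f_{p,q} + eta_B is strictly increasing on [x_-, x_+], so the crossing is
   unique. *)

(* Holds for every x: [Rpower x a] is [exp (a * ln x)] and [ln] vanishes off (0, +oo). *)
Lemma Rpower_pos x a : 0 < Rpower x a.
Proof. apply exp_pos. Qed.

Lemma Rpower_base_1 s : Rpower 1 s = 1.
Proof. unfold Rpower. now rewrite ln_1, Rmult_0_r, exp_0. Qed.

Lemma Rpower_root_le Y k B :
  0 < Y -> 0 < k -> Rpower Y (1 / k) <= B -> Y <= Rpower B k.
Proof.
  intros HY Hk HB.
  rewrite <- (Rpower_1 Y HY) at 1.
  replace 1 with (1 / k * k) by (field; lra).
  rewrite <- Rpower_mult.
  apply Rle_Rpower_l; [lra | split; [apply Rpower_pos | exact HB]].
Qed.

Lemma Rpower_mul_Rpower x B a s : 0 < x -> 0 < B ->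
  Rpower (x * Rpower B (- s)) a = Rpower x a * Rpower B (- (s * a)).
Proof.
  intros Hx HB.
  rewrite <- Rpower_mult_distr, Rpower_mult by (auto; apply Rpower_pos).
  do 2 f_equal; ring.
Qed.

Lemma r_exp_pos p q : q < 2 * p -> 0 < r_exp p q.
Proof. intros hq. unfold r_exp. apply Rdiv_lt_0_compat; lra. Qed.

Lemma x_minus_pos p q Dp Kq rho : rho < 1 -> 0 < x_minus p q Dp Kq rho.
Proof. intros. apply Rmult_lt_0_compat; [lra | apply Rpower_pos]. Qed.

Lemma x_minus_lt_x_plus p q Dp Kq rho :
  0 < rho -> x_minus p q Dp Kq rho < x_plus p q Dp Kq rho.
Proof.
  intros. unfold x_minus, x_plus.
  apply Rmult_lt_compat_r; [apply Rpower_pos | lra].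
Qed.

Lemma C_const_pow p q Dp Kq : 0 < Dp -> 0 < Kq -> q < 2 * p ->
  Rpower (C_const p q Dp Kq) (2 * p - q) = Kq / Dp.
Proof.
  intros hD hK hq. unfold C_const. rewrite Rpower_mult.
  replace (1 / (2 * p - q) * (2 * p - q)) with 1 by (field; lra).
  apply Rpower_1, Rdiv_lt_0_compat; assumption.
Qed.

Lemma fpq_scale_C p q Dp Kq c : 0 < Dp -> 0 < Kq -> q < 2 * p -> 0 < c ->
  fpq p q Dp Kq (c * C_const p q Dp Kq)
  = Kq * Rpower (c * C_const p q Dp Kq) q * (Rpower c (2 * p - q) - 1).
Proof.
  intros hD hK hq hc. unfold fpq.
  replace (2 * p) with (q + (2 * p - q)) at 1 by ring.
  rewrite Rpower_plus, <- (Rpower_mult_distr c _ (2 * p - q)) by (auto; apply Rpower_pos).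
  rewrite C_const_pow by assumption.
  field. lra.
Qed.

Lemma fpq_scale_C_lt0 p q Dp Kq c : 0 < Dp -> 0 < Kq -> q < 2 * p -> 0 < c < 1 ->
  fpq p q Dp Kq (c * C_const p q Dp Kq) < 0.
Proof.
  intros hD hK hq hc. rewrite fpq_scale_C by (auto; lra).
  assert (Rpower c (2 * p - q) < 1).
  { rewrite <- (Rpower_base_1 (2 * p - q)). apply Rlt_Rpower_l; lra. }
  assert (0 < Kq * Rpower (c * C_const p q Dp Kq) q)
    by (apply Rmult_lt_0_compat; [assumption | apply Rpower_pos]).
  nra.
Qed.

Lemma fpq_scale_C_gt0 p q Dp Kq c : 0 < Dp -> 0 < Kq -> q < 2 * p -> 1 < c ->
  0 < fpq p q Dp Kq (c * C_const p q Dp Kq).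
Proof.
  intros hD hK hq hc. rewrite fpq_scale_C by (auto; lra).
  assert (1 < Rpower c (2 * p - q)).
  { rewrite <- (Rpower_base_1 (2 * p - q)). apply Rlt_Rpower_l; lra. }
  assert (0 < Kq * Rpower (c * C_const p q Dp Kq) q)
    by (apply Rmult_lt_0_compat; [assumption | apply Rpower_pos]).
  nra.
Qed.

Lemma m_rho_fpq p q Dp Kq rho : m_rho p q Dp Kq rho =
  Rmin (- fpq p q Dp Kq (x_minus p q Dp Kq rho)) (fpq p q Dp Kq (x_plus p q Dp Kq rho)).
Proof. unfold m_rho, fpq. f_equal. ring. Qed.

Lemma m_rho_pos p q Dp Kq rho : 0 < Dp -> 0 < Kq -> q < 2 * p -> 0 < rho < 1 ->
  0 < m_rho p q Dp Kq rho.
Proof.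
  intros. rewrite m_rho_fpq. apply Rmin_glb_lt.
  - enough (fpq p q Dp Kq (x_minus p q Dp Kq rho) < 0) by lra.
    apply fpq_scale_C_lt0; auto; lra.
  - apply fpq_scale_C_gt0; auto; lra.
Qed.

Lemma ex_derive_fpq p q Dp Kq x : 0 < x -> ex_derive (fpq p q Dp Kq) x.
Proof. intros. unfold fpq, Rpower. auto_derive. auto. Qed.

Lemma fpq_rescale p q Dp Kq B x : q < 2 * p -> 0 < B -> 0 < x ->
  Dp * Rpower (x * Rpower B (- r_exp p q)) (2 * p)
    - Kq * Rpower (x * Rpower B (- r_exp p q)) q / B
  = fpq p q Dp Kq x / Rpower B (2 * p * r_exp p q).
Proof.
  intros hq HB Hx.
  assert (E : Rpower B (2 * p * r_exp p q) = Rpower B (r_exp p q * q) * B).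
  { rewrite <- (Rpower_1 B HB) at 3. rewrite <- Rpower_plus.
    f_equal. unfold r_exp. field. lra. }
  rewrite !Rpower_mul_Rpower, !Rpower_Ropp by assumption.
  replace (r_exp p q * (2 * p)) with (2 * p * r_exp p q) by ring.
  rewrite E. unfold fpq.
  field. split; [lra | apply Rgt_not_eq, Rpower_pos].
Qed.

Lemma remainder_term_le L m x y a k B :
  0 < L -> 0 < m -> 0 < x <= y -> 0 <= a -> 0 < k ->
  Rpower (4 * L * Rpower y a / m) (1 / k) <= B ->
  L * Rpower x a * Rpower B (- k) <= m / 4.
Proof.
  intros HL Hm Hxy Ha Hk HB.
  assert (HY : 4 * L * Rpower y a / m <= Rpower B k).
  { apply Rpower_root_le; auto.
    apply Rdiv_lt_0_compat; auto. pose proof (Rpower_pos y a). nra. }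
  assert (Hy : L * Rpower y a <= m / 4 * Rpower B k).
  { apply Rmult_le_compat_l with (r := m / 4) in HY; [|lra].
    replace (m / 4 * (4 * L * Rpower y a / m)) with (L * Rpower y a) in HY
      by (field; lra).
    exact HY. }
  assert (Hx : Rpower x a <= Rpower y a) by (apply Rle_Rpower_l; lra).
  pose proof (Rpower_pos B k).
  rewrite Rpower_Ropp.
  apply Rmult_le_reg_r with (Rpower B k); [assumption|].
  rewrite Rmult_assoc, Rinv_l, Rmult_1_r by lra.
  nra.
Qed.

Lemma scaled_le_eps0 x y eps0 s B : 0 < eps0 -> 0 < s -> 0 < y -> x <= y ->
  Rpower (y / eps0) (1 / s) <= B -> x * Rpower B (- s) <= eps0.
Proof.
  intros He Hs Hy Hxy HB.
  assert (HY : y / eps0 <= Rpower B s)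
    by (apply Rpower_root_le; auto; apply Rdiv_lt_0_compat; auto).
  pose proof (Rpower_pos B s).
  rewrite Rpower_Ropp.
  apply Rmult_le_reg_r with (Rpower B s); [assumption|].
  rewrite Rmult_assoc, Rinv_l, Rmult_1_r by lra.
  apply Rmult_le_compat_l with (r := eps0) in HY; [|lra].
  replace (eps0 * (y / eps0)) with y in HY by (field; lra).
  lra.
Qed.

Lemma strict_incr_dominated_sum (f h : R -> R) a b M :
  (forall x, a <= x <= b -> ex_derive f x) ->
  (forall x, a <= x <= b -> ex_derive h x) ->
  (forall x, a <= x <= b -> Rabs (Derive h x) <= M) ->
  (forall x, a <= x <= b -> M < Derive f x / 2) ->
  forall x y, a <= x -> x < y -> y <= b -> f x + h x < f y + h y.
Proof.
  intros Hf Hh HhM HM.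
  apply (incr_function_le (fun x => f x + h x) a b (fun x => Derive f x + Derive h x)).
  - intros x Hax Hxb. simpl in Hax, Hxb.
    apply (is_derive_plus f h x (Derive f x) (Derive h x)); apply Derive_correct; auto.
  - intros x Hax Hxb. simpl in Hax, Hxb.
    pose proof (Rabs_maj2 (Derive h x)). pose proof (Rabs_pos (Derive h x)).
    specialize (HhM x (conj Hax Hxb)). specialize (HM x (conj Hax Hxb)).
    lra.
Qed.

Lemma eq_of_strict_incr_on (g : R -> R) a b x y :
  (forall u v, a <= u -> u < v -> v <= b -> g u < g v) ->
  a <= x <= b -> a <= y <= b -> g x = g y -> x = y.
Proof.
  intros Hg Hx Hy Hxy.
  destruct (Rtotal_order x y) as [H | [H | H]]; auto.
  - pose proof (Hg x y (proj1 Hx) H (proj2 Hy)). lra.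
  - pose proof (Hg y x (proj1 Hy) H (proj2 Hx)). lra.
Qed.

Section Rescaled_Delta.

Variables (p q Dp Kq eps0 Lb Lv db dv rho : R) (Delta Rp : R -> R -> R).
Hypotheses (hq0 : 0 <= q) (hq : q < 2 * p) (hD : 0 < Dp) (hK : 0 < Kq)
  (heps0 : 0 < eps0) (hLb : 0 < Lb) (hLv : 0 < Lv) (hdb : 0 < db) (hdv : 0 < dv)
  (hrho : 0 < rho < 1).
Hypothesis hdec : forall e B, 0 < e <= eps0 -> 0 < B ->
  Delta e B = Dp * Rpower e (2 * p) - Kq * Rpower e q / B + Rp e B.
Hypothesis hbound : forall e B, 0 < e <= eps0 -> 0 < B ->
  Rabs (Rp e B) <= Lb * Rpower e (2 * p + db) + Lv * Rpower e (q + dv) / B.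
Hypothesis hcont : forall e B, 0 < e -> 0 < B -> continuous (fun t => Delta t B) e.

Variable B : R.
Hypothesis hB : B0 p q Dp Kq eps0 Lb Lv db dv rho <= B.

Local Notation r := (r_exp p q).
Local Notation xm := (x_minus p q Dp Kq rho).
Local Notation xp := (x_plus p q Dp Kq rho).
Local Notation m := (m_rho p q Dp Kq rho).
Local Notation f := (fpq p q Dp Kq).
Local Notation eta := (eta_B p q Rp B).

Lemma B_ge_bias_root :
  Rpower (4 * Lb * Rpower xp (2 * p + db) / m) (1 / (r * db)) <= B.
Proof.
  eapply Rle_trans; [| exact hB].
  eapply Rle_trans; [apply Rmax_l | apply Rmax_l].
Qed.

Lemma B_ge_variance_root :
  Rpower (4 * Lv * Rpower xp (q + dv) / m) (1 / (r * dv)) <= B.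
Proof.
  eapply Rle_trans; [| exact hB].
  eapply Rle_trans; [apply Rmax_r | apply Rmax_l].
Qed.

Lemma B_ge_domain_root : Rpower (xp / eps0) (1 / r) <= B.
Proof. eapply Rle_trans; [apply Rmax_r | exact hB]. Qed.

Lemma B_pos : 0 < B.
Proof. eapply Rlt_le_trans; [apply Rpower_pos | apply B_ge_domain_root]. Qed.

Lemma bracket_pos : 0 < xm /\ xm < xp.
Proof. split; [apply x_minus_pos | apply x_minus_lt_x_plus]; lra. Qed.

Lemma scaled_in_domain x : 0 < x <= xp -> 0 < x * Rpower B (- r) <= eps0.
Proof.
  intros Hx. split.
  - apply Rmult_lt_0_compat; [lra | apply Rpower_pos].
  - apply scaled_le_eps0 with xp; try lra.
    + now apply r_exp_pos.
    + apply B_ge_domain_root.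
Qed.

Lemma Delta_rescaled x : 0 < x <= xp ->
  Delta (x * Rpower B (- r)) B = (f x + eta x) / Rpower B (2 * p * r).
Proof.
  intros Hx. pose proof B_pos.
  rewrite hdec, fpq_rescale by (try apply scaled_in_domain; lra).
  unfold eta_B. field. apply Rgt_not_eq, Rpower_pos.
Qed.

Lemma eta_B_abs_le x : 0 < x <= xp -> Rabs (eta x) <= m / 2.
Proof.
  intros Hx. pose proof B_pos as HB. pose proof (r_exp_pos p q hq) as Hr.
  unfold eta_B. rewrite Rabs_mult, (Rabs_pos_eq (Rpower _ _)) by (left; apply Rpower_pos).
  eapply Rle_trans.
  { apply Rmult_le_compat_l; [left; apply Rpower_pos |].
    apply hbound; [apply scaled_in_domain; lra | exact HB]. }
  rewrite !Rpower_mul_Rpower by lra.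
  assert (E1 : Rpower B (- (r * db))
               = Rpower B (2 * p * r) * Rpower B (- (r * (2 * p + db)))).
  { rewrite <- Rpower_plus. f_equal. ring. }
  assert (E2 : Rpower B (- (r * dv))
               = Rpower B (2 * p * r) * Rpower B (- (r * (q + dv))) / B).
  { apply Rmult_eq_reg_r with B; [| lra].
    unfold Rdiv. rewrite Rmult_assoc, Rinv_l, Rmult_1_r by lra.
    rewrite <- (Rpower_1 B HB) at 2. rewrite <- !Rpower_plus.
    f_equal. unfold r_exp. field. lra. }
  replace (Rpower B (2 * p * r) * _)
    with (Lb * Rpower x (2 * p + db) * Rpower B (- (r * db))
          + Lv * Rpower x (q + dv) * Rpower B (- (r * dv)))
    by (rewrite E1, E2; field; lra).
  pose proof (m_rho_pos p q Dp Kq rho hD hK hq hrho).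
  assert (Hbias : Lb * Rpower x (2 * p + db) * Rpower B (- (r * db)) <= m / 4).
  { apply (remainder_term_le _ _ _ xp); try lra.
    - apply Rmult_lt_0_compat; lra.
    - apply B_ge_bias_root. }
  assert (Hvar : Lv * Rpower x (q + dv) * Rpower B (- (r * dv)) <= m / 4).
  { apply (remainder_term_le _ _ _ xp); try lra.
    - apply Rmult_lt_0_compat; lra.
    - apply B_ge_variance_root. }
  lra.
Qed.

Lemma Delta_x_minus_neg : Delta (xm * Rpower B (- r)) B < 0.
Proof.
  pose proof bracket_pos.
  rewrite Delta_rescaled by lra.
  apply Rdiv_neg_pos; [| apply Rpower_pos].
  assert (f xm <= - m) by (rewrite m_rho_fpq; pose proof (Rmin_l (- f xm) (f xp)); lra).
  pose proof (Rle_abs (eta xm)). pose proof (eta_B_abs_le xm ltac:(lra)).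
  pose proof (m_rho_pos p q Dp Kq rho hD hK hq hrho).
  lra.
Qed.

Lemma Delta_x_plus_pos : Delta (xp * Rpower B (- r)) B > 0.
Proof.
  pose proof bracket_pos.
  rewrite Delta_rescaled by lra.
  apply Rdiv_lt_0_compat; [| apply Rpower_pos].
  assert (m <= f xp) by (rewrite m_rho_fpq; apply Rmin_r).
  pose proof (Rabs_maj2 (eta xp)). pose proof (eta_B_abs_le xp ltac:(lra)).
  pose proof (m_rho_pos p q Dp Kq rho hD hK hq hrho).
  lra.
Qed.

Lemma Delta_root_exists :
  exists es, xm * Rpower B (- r) <= es <= xp * Rpower B (- r) /\ Delta es B = 0.
Proof.
  pose proof bracket_pos. pose proof (Rpower_pos B (- r)).
  assert (Hlt : xm * Rpower B (- r) < xp * Rpower B (- r))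
    by (apply Rmult_lt_compat_r; lra).
  assert (Hcont : forall a, xm * Rpower B (- r) <= a <= xp * Rpower B (- r) ->
                          continuity_pt (fun t => Delta t B) a).
  { intros a Ha. apply continuity_pt_filterlim, hcont; [| apply B_pos].
    assert (0 < xm * Rpower B (- r)) by (apply Rmult_lt_0_compat; lra).
    lra. }
  destruct (Ranalysis5.IVT_interv _ _ _ Hcont Hlt Delta_x_minus_neg Delta_x_plus_pos)
    as [es Hes].
  now exists es.
Qed.

Lemma Delta_root_unique M :
  (forall x, xm <= x <= xp -> ex_derive eta x) ->
  (forall x, xm <= x <= xp -> Rabs (Derive eta x) <= M) ->
  (forall x, xm <= x <= xp -> M < Derive f x / 2) ->
  forall e1 e2,
    xm * Rpower B (- r) <= e1 <= xp * Rpower B (- r) -> Delta e1 B = 0 ->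
    xm * Rpower B (- r) <= e2 <= xp * Rpower B (- r) -> Delta e2 B = 0 ->
    e1 = e2.
Proof.
  intros Heta HM Hf e1 e2 He1 HD1 He2 HD2.
  pose proof bracket_pos.
  set (s := Rpower B (- r)) in *.
  assert (Hs : 0 < s) by apply Rpower_pos.
  assert (Hroot : forall e, xm * s <= e <= xp * s -> Delta e B = 0 ->
            xm <= e / s <= xp /\ f (e / s) + eta (e / s) = 0).
  { intros e He HDe.
    assert (Hx : xm <= e / s <= xp).
    { split; apply Rmult_le_reg_r with s; auto;
        replace (e / s * s) with e by (field; lra); lra. }
    split; [exact Hx |].
    replace e with (e / s * s) in HDe by (field; lra).
    rewrite Delta_rescaled in HDe by lra.
    apply Rmult_integral in HDe as [Hz | Hz]; [exact Hz |].
    exfalso. revert Hz. apply Rinv_neq_0_compat, Rgt_not_eq, Rpower_pos. }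
  destruct (Hroot e1 He1 HD1) as [Hx1 Hz1], (Hroot e2 He2 HD2) as [Hx2 Hz2].
  assert (Hincr : forall u v, xm <= u -> u < v -> v <= xp -> f u + eta u < f v + eta v).
  { apply strict_incr_dominated_sum with M; auto.
    intros x Hx. apply ex_derive_fpq. lra. }
  assert (Heq : e1 / s = e2 / s).
  { apply (eq_of_strict_incr_on (fun x => f x + eta x) xm xp); auto. congruence. }
  replace e1 with (e1 / s * s) by (field; lra).
  rewrite Heq. field. lra.
Qed.

End Rescaled_Delta.


Theorem proposition7
  (p q Dp Kq eps0 Lb Lv db dv rho : R) (Delta Rp : R -> R -> R)
  (hp : 1 <= p) (hq0 : 0 <= q) (hq : q < 2 * p)
  (hD : 0 < Dp) (hK : 0 < Kq) (heps0 : 0 < eps0)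
  (hLb : 0 < Lb) (hLv : 0 < Lv) (hdb : 0 < db) (hdv : 0 < dv)
  (hdec : forall e B, 0 < e <= eps0 -> 0 < B ->
     Delta e B = Dp * Rpower e (2 * p) - Kq * Rpower e q / B + Rp e B)
  (hbound : forall e B, 0 < e <= eps0 -> 0 < B ->
     Rabs (Rp e B) <= Lb * Rpower e (2 * p + db) + Lv * Rpower e (q + dv) / B)
  (hcont : forall e B, 0 < e -> 0 < B -> continuous (fun t => Delta t B) e)
  (hrho : 0 < rho < 1) :
  let r := r_exp p q in
  let xm := x_minus p q Dp Kq rho in
  let xp := x_plus p q Dp Kq rho in
  0 < m_rho p q Dp Kq rho /\
  forall B, B0 p q Dp Kq eps0 Lb Lv db dv rho <= B ->
    Delta (xm * Rpower B (- r)) B < 0 /\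
    Delta (xp * Rpower B (- r)) B > 0 /\
    (exists es, xm * Rpower B (- r) <= es <= xp * Rpower B (- r) /\ Delta es B = 0) /\
    ((forall x, xm <= x <= xp -> 0 < Derive (fpq p q Dp Kq) x) ->
     (forall x, xm <= x <= xp -> ex_derive (eta_B p q Rp B) x) ->
     (exists M, (forall x, xm <= x <= xp -> Rabs (Derive (eta_B p q Rp B) x) <= M) /\
                (forall y, xm <= y <= xp -> M < Derive (fpq p q Dp Kq) y / 2)) ->
     exists! es, xm * Rpower B (- r) <= es <= xp * Rpower B (- r) /\ Delta es B = 0).
Proof.
  intros r xm xp.
  split; [now apply m_rho_pos |].
  intros B HB.
  split; [now apply (Delta_x_minus_neg p q Dp Kq eps0 Lb Lv db dv rho Delta Rp) |].
  split; [now apply (Delta_x_plus_pos p q Dp Kq eps0 Lb Lv db dv rho Delta Rp) |].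
  assert (Hex : exists es, xm * Rpower B (- r) <= es <= xp * Rpower B (- r)
                           /\ Delta es B = 0)
    by now apply (Delta_root_exists p q Dp Kq eps0 Lb Lv db dv rho Delta Rp).
  split; [exact Hex |].
  intros _ Heta [M [HM Hf]].
  destruct Hex as [es Hes].
  exists es. split; [exact Hes |].
  intros e [He HDe].
  apply (Delta_root_unique p q Dp Kq eps0 Lb Lv db dv rho Delta Rp) with (B := B) (M := M);
    tauto.
Qed.
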